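(* Let $f^+,f^-:[0,1]\to[0,1]$ satisfy $f^+(0)=f^-(0)=0$, and let $\alpha>0$. Suppose that $ALG(uvw)\le\alpha\,LP(uvw)$ for every triangle of every sign pattern in $\{+,-\}^3$ (i.e. $(+,+,+)$, $(+,+,-)$, $(+,-,-)$, $(-,-,-)$) and every choice of edge lengths in $[0,1]$ satisfying the triangle inequalities. Then $\alpha>2.025$.
   Context: A triangle $uvw$ has pairs $uv,vw,uw$, each a positive ($+$) or negative ($-$) edge with length $x_e\in[0,1]$; triangle inequalities: each length is at most the sum of the other two. Let $p_e=f^+(x_e)$ for positive and $p_e=f^-(x_e)$ for negative edges. For a pair $(u,v)$ with third vertex $w$: $e.cost_w(u,v)=p_{uw}(1-p_{vw})+(1-p_{uw})p_{vw}$ if $(u,v)$ is positive, $(1-p_{uw})(1-p_{vw})$ if negative; $e.lp_w(u,v)=(1-p_{uw}p_{vw})x_{uv}$ if positive, $(1-p_{uw}p_{vw})(1-x_{uv})$ if negative. $ALG(uvw)=e.cost_w(u,v)+e.cost_v(w,u)+e.cost_u(v,w)$, $LP(uvw)=e.lp_w(u,v)+e.lp_v(w,u)+e.lp_u(v,w)$. (These are the per-triangle quantities of the pivot rounding algorithm for correlation clustering on complete graphs, which cuts a positive edge to the pivot with probability $f^+$ of its LP length and a negative one with probability $f^-$ of its LP length.) *)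

From Stdlib Require Import Reals.
Open Scope R_scope.

(* Edge sign: true = positive (+), false = negative (-). *)

(* Rounding probability of an edge of sign s and LP length x. *)
Definition pe (fp fm : R -> R) (s : bool) (x : R) : R :=
  if s then fp x else fm x.

(* e.cost_w(u,v), for the pair (u,v) of sign s, with p1 = p_{uw}, p2 = p_{vw}. *)
Definition ecost (s : bool) (p1 p2 : R) : R :=
  if s then p1 * (1 - p2) + (1 - p1) * p2 else (1 - p1) * (1 - p2).

(* e.lp_w(u,v), for the pair (u,v) of sign s and length x, with p1 = p_{uw}, p2 = p_{vw}. *)
Definition elp (s : bool) (p1 p2 x : R) : R :=
  if s then (1 - p1 * p2) * x else (1 - p1 * p2) * (1 - x).

Definition ALG (fp fm : R -> R) (s_uv s_vw s_uw : bool) (x_uv x_vw x_uw : R) : R :=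
  let p_uv := pe fp fm s_uv x_uv in
  let p_vw := pe fp fm s_vw x_vw in
  let p_uw := pe fp fm s_uw x_uw in
  (* e.cost_w(u,v) + e.cost_v(w,u) + e.cost_u(v,w) *)
  ecost s_uv p_uw p_vw + ecost s_uw p_vw p_uv + ecost s_vw p_uv p_uw.

Definition LP (fp fm : R -> R) (s_uv s_vw s_uw : bool) (x_uv x_vw x_uw : R) : R :=
  let p_uv := pe fp fm s_uv x_uv in
  let p_vw := pe fp fm s_vw x_vw in
  let p_uw := pe fp fm s_uw x_uw in
  elp s_uv p_uw p_vw x_uv + elp s_uw p_vw p_uv x_uw + elp s_vw p_uv p_uw x_vw.

Definition valid_lengths (a b c : R) : Prop :=
  0 <= a <= 1 /\ 0 <= b <= 1 /\ 0 <= c <= 1 /\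
  a <= b + c /\ b <= a + c /\ c <= a + b.

From Stdlib Require Import Reals Lra Psatz.
Open Scope R_scope.

(* Seven triangles suffice.  Degenerate (+,-,-) triangles force f^-(1) = 1 and
   f^-(4/5) >= 0.77; a (+,+,-) triangle then forces f^+(1/2) >= 0.975, and
   (+,+,+) and (-,+,+) triangles pin f^+(2/5) into [0.4, 0.5642] and
   f^+(1/10) below 0.107.  With these values the (+,+,+) triangle with sides
   1/10, 2/5, 1/2 has ALG > 2.025 LP. *)

Lemma elp_nonneg (s : bool) (p1 p2 x : R) :
  0 <= p1 <= 1 -> 0 <= p2 <= 1 -> 0 <= x <= 1 -> 0 <= elp s p1 p2 x.
Proof.
  intros Hp1 Hp2 Hx; unfold elp.
  assert (0 <= 1 - p1 * p2) by nra.
  destruct s; apply Rmult_le_pos; lra.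
Qed.

Lemma LP_nonneg (fp fm : R -> R) (s_uv s_vw s_uw : bool) (x_uv x_vw x_uw : R) :
  (forall x, 0 <= x <= 1 -> 0 <= fp x <= 1) ->
  (forall x, 0 <= x <= 1 -> 0 <= fm x <= 1) ->
  valid_lengths x_uv x_vw x_uw ->
  0 <= LP fp fm s_uv s_vw s_uw x_uv x_vw x_uw.
Proof.
  intros Hp Hm (Huv & Hvw & Huw & _).
  assert (Hpe : forall s x, 0 <= x <= 1 -> 0 <= pe fp fm s x <= 1)
    by (intros [|] x Hx; unfold pe; auto).
  unfold LP.
  repeat apply Rplus_le_le_0_compat; apply elp_nonneg; auto.
Qed.

Section RatioBelow2025.

Variables fp fm : R -> R.
Hypothesis fp_unit : forall x, 0 <= x <= 1 -> 0 <= fp x <= 1.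
Hypothesis fm_unit : forall x, 0 <= x <= 1 -> 0 <= fm x <= 1.
Hypothesis fp0 : fp 0 = 0.
Hypothesis ratio : forall (s_uv s_vw s_uw : bool) (x_uv x_vw x_uw : R),
  valid_lengths x_uv x_vw x_uw ->
  ALG fp fm s_uv s_vw s_uw x_uv x_vw x_uw
    <= 2025 / 1000 * LP fp fm s_uv s_vw s_uw x_uv x_vw x_uw.

Ltac triangle s_uv s_vw s_uw x_uv x_vw x_uw :=
  let H := fresh "Htri" in
  assert (H := ratio s_uv s_vw s_uw x_uv x_vw x_uw
                 ltac:(unfold valid_lengths; lra));
  unfold ALG, LP, pe, ecost, elp in H;
  rewrite ?fp0 in H.

Lemma fm_one : fm 1 = 1.
Proof.
  destruct (fm_unit 1 ltac:(lra)).
  triangle true false false 0 1 1.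
  nra.
Qed.

Lemma fp_half_ge : 975 / 1000 <= fp (1/2).
Proof.
  destruct (fp_unit (1/2) ltac:(lra)).
  triangle true true false (1/2) (1/2) 1.
  rewrite fm_one in Htri.
  nra.
Qed.

Lemma fm_4_5_ge : 77 / 100 <= fm (4/5).
Proof.
  destruct (fm_unit (4/5) ltac:(lra)).
  triangle true false false 0 (4/5) (4/5).
  nra.
Qed.

Lemma fp_2_5_le : fp (2/5) <= 5642 / 10000.
Proof.
  destruct (fp_unit (2/5) ltac:(lra)).
  triangle true true true 0 (2/5) (2/5).
  nra.
Qed.

Lemma fp_2_5_ge : 4 / 10 <= fp (2/5).
Proof.
  destruct (fp_unit (2/5) ltac:(lra)).
  destruct (fm_unit (4/5) ltac:(lra)).
  pose proof fm_4_5_ge.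
  triangle false true true (4/5) (2/5) (2/5).
  nra.
Qed.

Lemma fp_1_10_le : fp (1/10) <= 107 / 1000.
Proof.
  destruct (fp_unit (1/10) ltac:(lra)).
  triangle true true true 0 (1/10) (1/10).
  nra.
Qed.

Lemma no_ratio_2025 : False.
Proof.
  destruct (fp_unit (1/10) ltac:(lra)).
  destruct (fp_unit (1/2) ltac:(lra)).
  pose proof fp_half_ge; pose proof fp_2_5_le; pose proof fp_2_5_ge;
    pose proof fp_1_10_le.
  triangle true true true (1/10) (2/5) (1/2).
  nra.
Qed.

End RatioBelow2025.

Theorem theorem7 (fp fm : R -> R) (alpha : R) :
  (forall x, 0 <= x <= 1 -> 0 <= fp x <= 1) ->
  (forall x, 0 <= x <= 1 -> 0 <= fm x <= 1) ->
  fp 0 = 0 -> fm 0 = 0 ->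
  0 < alpha ->
  (forall (s_uv s_vw s_uw : bool) (x_uv x_vw x_uw : R),
      valid_lengths x_uv x_vw x_uw ->
      ALG fp fm s_uv s_vw s_uw x_uv x_vw x_uw
        <= alpha * LP fp fm s_uv s_vw s_uw x_uv x_vw x_uw) ->
  alpha > 2025 / 1000.
Proof.
  intros Hp Hm Hp0 _ _ Hratio.
  apply Rnot_le_gt; intros Hle.
  apply (no_ratio_2025 fp fm Hp Hm Hp0).
  intros s_uv s_vw s_uw x_uv x_vw x_uw Hx.
  apply Rle_trans with (1 := Hratio s_uv s_vw s_uw x_uv x_vw x_uw Hx).
  apply Rmult_le_compat_r; [apply LP_nonneg|]; assumption.
Qed.
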